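(* Let $n\ge 3$, let $d_0,\dots,d_{n-1}>0$ (indices modulo $n$), let $\lambda\in(\tfrac14,1)$, and let $\beta_i$ and the $n\times n$ matrix $Q_n$ be as defined in the context. Let $P_i=\left(\cos\frac{2i\pi}{n},\sin\frac{2i\pi}{n}\right)\in\mathbb{R}^2$ for $i=0,\dots,n-1$, let $C_P=\sum_{i=0}^{n-1}\beta_iP_i$, and let $P-C_P$ denote the $n\times 2$ matrix whose $i$-th row is $P_i-C_P$. Then $$Q_n(P-C_P)=\lambda(P-C_P),$$ i.e. for every $j$, $\sum_{i=0}^{n-1}Q_{j,i}(P_i-C_P)=\lambda(P_j-C_P)$.
   Context: $\alpha_j=\frac{1}{n}\frac{d_{j-1}d_{j+2}}{(d_{j-1}+d_{j+1})(d_j+d_{j+2})}$, $\beta_i=\frac{d_{i-1}(d_{i-2}+d_{i+2})+d_{i+2}(d_{i-1}+d_{i+3})}{\sum_{k=0}^{n-1}(d_k+d_{k+2})(d_{k-1}+d_{k+3})}$, and $Q_n=(Q_{i,j})_{i,j=0}^{n-1}$ with $Q_{i,j}=(1-\lambda)\beta_j+2\lambda\alpha_i(1+2\cos\frac{2(j-i)\pi}{n})$ for $j\ne i$ and $Q_{i,i}=\lambda+(1-\lambda)\beta_i-2(n-3)\lambda\alpha_i$. Equivalently, the rule is $\overline P_j=(1-\lambda)C+\lambda P_j+2\lambda\alpha_j\big(-nP_j+\sum_{i}(1+2\cos\frac{2(j-i)\pi}{n})P_i\big)$ with $C=\sum_i\beta_iP_i$. *)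

From HB Require Import structures.
From mathcomp Require Import all_boot all_order all_algebra.
From mathcomp Require Import reals trigo.
Set Implicit Arguments. Unset Strict Implicit. Unset Printing Implicit Defensive.
Import Order.TTheory GRing.Theory Num.Theory.
Local Open Scope ring_scope.

Section Defs.
Variable R : realType.
Variable n : nat.
Variable d : nat -> R.

(* d with index taken modulo n: dm k = d_{k mod n}.  Negative offsets j-1, j-2
   are written j + n - 1, j + n - 2 (n >= 3). *)
Definition dm (k : nat) : R := d (k %% n)%N.

Definition alpha (j : nat) : R :=
  n%:R^-1 * (dm (j + n - 1) * dm (j + 2)) /
    ((dm (j + n - 1) + dm (j + 1)) * (dm j + dm (j + 2))).

Definition beta (i : nat) : R :=
  (dm (i + n - 1) * (dm (i + n - 2) + dm (i + 2))
     + dm (i + 2) * (dm (i + n - 1) + dm (i + 3)))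
  / \sum_(k < n) (dm k + dm (k + 2)) * (dm (k + n - 1) + dm (k + 3)).

Definition Qmat (lam : R) : 'M[R]_n :=
  \matrix_(i < n, j < n)
    if i == j then lam + (1 - lam) * beta i - 2 * (n%:R - 3) * lam * alpha i
    else (1 - lam) * beta j
         + 2 * lam * alpha i
             * (1 + 2 * cos (2 * ((j%:R - i%:R) * pi) / n%:R)).

Definition Pmat : 'M[R]_(n, 2) :=
  \matrix_(i < n, k < 2)
    if k == 0 :> nat then cos (2 * (i%:R * pi) / n%:R)
    else sin (2 * (i%:R * pi) / n%:R).

Definition CP : 'rV[R]_2 := \sum_(i < n) beta i *: row i Pmat.

Definition PmC : 'M[R]_(n, 2) := Pmat - \matrix_(i < n, k < 2) CP 0 k.

End Defs.

From HB Require Import structures.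
From mathcomp Require Import all_boot all_order all_algebra.
From mathcomp Require Import reals trigo.
From mathcomp Require Import ring lra zify.
Import Order.TTheory GRing.Theory Num.Theory.
Local Open Scope ring_scope.

(* Write Q_ij = (1 - lam) beta_j + 2 lam alpha_i (1 + 2 cos (theta_j - theta_i))
   + [i = j] (lam - 2 n lam alpha_i), where theta_j = 2 j pi / n.  The weights
   beta_j sum to 1, because the numerators of the beta_j are cyclic shifts of
   the terms of their common denominator.  The vertices P_j of the regular
   n-gon satisfy sum_j P_j = 0, sum_j cos (theta_j - theta_i) = 0 and
   sum_j cos (theta_j - theta_i) P_j = (n / 2) P_i, by the vanishing of
   sum_j cos (m theta_j) and sum_j sin (m theta_j) for m = 1, 2.  Hence every
   row of Q sums to 1 and sum_j Q_ij P_j = (1 - lam) C_P + lam P_i, which is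
   the claim after subtracting C_P. *)

Lemma sum_ord_shift1 (V : zmodType) (n : nat) (f : nat -> V) :
  f n = f 0%N -> \sum_(j < n) f j.+1 = \sum_(j < n) f j.
Proof.
move=> fn; apply: (@addrI _ (f 0%N)).
have -> : f 0%N + \sum_(j < n) f j.+1 = \sum_(j < n.+1) f j by rewrite big_ord_recl.
by rewrite big_ord_recr /= fn addrC.
Qed.

Lemma sum_ord_shift (V : zmodType) (n c : nat) (f : nat -> V) :
  (forall k, f (k + n)%N = f k) -> \sum_(k < n) f (k + c)%N = \sum_(k < n) f k.
Proof.
move=> fP; elim: c => [|c IHc]; first by under eq_bigr do rewrite addn0.
rewrite -IHc -(@sum_ord_shift1 _ _ (fun k => f (k + c)%N)) /=; last by rewrite addnC fP.
by apply: eq_bigr => k _; rewrite addnS.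
Qed.

Section RootsOfUnity.
Variable R : realType.

Lemma sum_cos_sin_rotation (n m : nat) (h : R) :
  n%:R * h = m%:R * (pi *+ 2) -> cos h != 1 ->
  \sum_(j < n) cos (j%:R * h) = 0 /\ \sum_(j < n) sin (j%:R * h) = 0.
Proof.
(* The rotation by h permutes the points j h modulo 2 pi, so (C, S) is a fixed
   vector of a rotation different from the identity. *)
move=> nh h1; set C := \sum_(j < n) _; set S := \sum_(j < n) _.
have shift (g : R -> R) : periodic g (pi *+ 2) ->
    \sum_(j < n) g (j.+1%:R * h) = \sum_(j < n) g (j%:R * h).
  move=> gP; apply: (@sum_ord_shift1 _ _ (fun j => g (j%:R * h))).
  by rewrite nh mulr_natl mul0r -[X in g X]add0r periodicn.
have jS j : j.+1%:R * h = j%:R * h + h by rewrite -addn1 natrD mulrDl mul1r.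
have rotC : C * cos h - S * sin h = C.
  rewrite {2}/C -(shift _ (@cosD2pi R)); under eq_bigr do rewrite jS cosD.
  by rewrite sumrB -!mulr_suml.
have rotS : C * sin h + S * cos h = S.
  rewrite {2}/S -(shift _ (@sinD2pi R)); under eq_bigr do rewrite jS sinD.
  by rewrite big_split -!mulr_suml addrC.
have c1 : 1 - cos h != 0 by rewrite subr_eq0 eq_sym.
have C0 : C = 0.
  have : (1 - cos h) *+ 2 * C = 0.
    have : (cos h - 1) * (C * cos h - S * sin h - C) + sin h * (C * sin h + S * cos h - S)
      - (cos h ^+ 2 + sin h ^+ 2 - 1) * C = (1 - cos h) *+ 2 * C by ring.
    by rewrite rotC rotS cos2Dsin2 !subrr !mulr0 mul0r !subr0 addr0 => <-.
  by move/eqP; rewrite mulf_eq0 mulrn_eq0 (negbTE c1) /= => /eqP.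
split=> //.
have : (1 - cos h) * S = 0 by rewrite mulrBl mul1r -{1}rotS C0 mul0r add0r mulrC subrr.
by move/eqP; rewrite mulf_eq0 (negbTE c1) => /eqP.
Qed.

Definition theta (n j : nat) : R := 2 * (j%:R * pi) / n%:R.

Lemma sum_cos_sin_theta (n m : nat) : (0 < m < n)%N ->
  \sum_(j < n) cos (theta n j *+ m) = 0 /\ \sum_(j < n) sin (theta n j *+ m) = 0.
Proof.
case/andP=> m0 mn; have n0 : n%:R != 0 :> R by rewrite pnatr_eq0 -lt0n (ltn_trans m0).
set h := theta n 1 *+ m.
have thE j : theta n j *+ m = j%:R * h by rewrite /h -!(mulr_natr (theta _ _)) /theta; field.
suff [Sc Ss] : \sum_(j < n) cos (j%:R * h) = 0 /\ \sum_(j < n) sin (j%:R * h) = 0.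
  by split; [under eq_bigr do rewrite thE | under eq_bigr do rewrite thE].
apply: (@sum_cos_sin_rotation n m); first by rewrite /h -!(mulr_natr (theta _ _)) /theta; field.
have -> : h = (pi * m%:R / n%:R : R) *+ 2 by rewrite /h -!(mulr_natr (theta _ _)) /theta; field.
have s0 : 0 < sin (pi * m%:R / n%:R : R).
  apply: sin_gt0_pi.
  have pi0 := @pi_gt0 R; have m0' : (0 : R) < m%:R by rewrite ltr0n.
  have n0' : (0 : R) < n%:R by rewrite ltr0n (ltn_trans m0).
  by rewrite divr_gt0 ?mulr_gt0 //= ltr_pdivrMr // ltr_pM2l // ltr_nat.
rewrite cos_mulr2n cos2sin2 lt_eqF //; have := exprn_gt0 2 s0; lra.
Qed.

Lemma sum_cos_theta_sub (n i : nat) : (1 < n)%N ->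
  \sum_(j < n) cos (theta n j - theta n i) = 0.
Proof.
move=> n1; have [Sc Ss] := sum_cos_sin_theta n 1 n1.
under eq_bigr do rewrite cosB.
by rewrite big_split /= -!mulr_suml Sc Ss !mul0r addr0.
Qed.

Lemma sum_cos_theta_sub_mul_cos (n i : nat) : (2 < n)%N ->
  \sum_(j < n) cos (theta n j - theta n i) * cos (theta n j) = n%:R / 2 * cos (theta n i).
Proof.
move=> n2; have [Sc Ss] := sum_cos_sin_theta n 2 n2.
have E a b : cos (a - b) * cos a = (cos (a *+ 2) * cos b + sin (a *+ 2) * sin b + cos b) / 2.
  by rewrite cosB cos_mulr2n sin_mulr2n; field.
under eq_bigr do rewrite E.
by rewrite -mulr_suml !big_split /= -!mulr_suml Sc Ss sumr_const card_ord; field.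
Qed.

Lemma sum_cos_theta_sub_mul_sin (n i : nat) : (2 < n)%N ->
  \sum_(j < n) cos (theta n j - theta n i) * sin (theta n j) = n%:R / 2 * sin (theta n i).
Proof.
move=> n2; have [Sc Ss] := sum_cos_sin_theta n 2 n2.
have E a b : cos (a - b) * sin a = (sin (a *+ 2) * cos b - cos (a *+ 2) * sin b + sin b) / 2.
  by rewrite cosB cos_mulr2n cos2sin2 sin_mulr2n; field.
under eq_bigr do rewrite E.
by rewrite -mulr_suml !big_split /= sumrN -!mulr_suml Sc Ss sumr_const card_ord; field.
Qed.

Lemma PmatE (n : nat) (j : 'I_n) (k : 'I_2) :
  Pmat R n j k = if k == 0 :> nat then cos (theta n j) else sin (theta n j).
Proof. by rewrite mxE. Qed.

Lemma sum_Pmat_col (n : nat) (k : 'I_2) : (1 < n)%N -> \sum_(j < n) Pmat R n j k = 0.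
Proof.
move=> n1; have [Sc Ss] := sum_cos_sin_theta n 1 n1.
by under eq_bigr do rewrite PmatE; case: k => [[|[|]]].
Qed.

Lemma sum_cos_theta_sub_mul_Pmat (n : nat) (i : 'I_n) (k : 'I_2) : (2 < n)%N ->
  \sum_(j < n) cos (theta n j - theta n i) * Pmat R n j k = n%:R / 2 * Pmat R n i k.
Proof.
move=> n2; under eq_bigr do rewrite PmatE; rewrite PmatE.
case: k => [[|[|//]]] _ /=.
- exact: sum_cos_theta_sub_mul_cos.
- exact: sum_cos_theta_sub_mul_sin.
Qed.

End RootsOfUnity.

Lemma sum_mul_centered_eigen (R : numFieldType) (n : nat) (i : 'I_n) (lam a : R)
    (b c p q : 'I_n -> R) :
  (forall j, q j = (1 - lam) * b j + 2 * lam * a * (1 + 2 * c j)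
                   + (if i == j then lam - 2 * n%:R * lam * a else 0)) ->
  \sum_j b j = 1 -> \sum_j p j = 0 -> \sum_j c j = 0 ->
  \sum_j c j * p j = n%:R / 2 * p i ->
  \sum_j q j * (p j - \sum_l b l * p l) = lam * (p i - \sum_l b l * p l).
Proof.
move=> qE b1 p0 c0 cp; set z := \sum_l b l * p l.
have sum_if (x : 'I_n -> R) : \sum_j (if i == j then x j else 0) = x i.
  by rewrite -big_mkcond (big_pred1 i) // => j; rewrite eq_sym.
have q1 : \sum_j q j = 1.
  under eq_bigr do rewrite qE.
  rewrite !big_split /= -!mulr_sumr big_split /= -mulr_sumr b1 c0 sum_if sumr_const card_ord.
  by rewrite -mulr_natr; ring.
have qp : \sum_j q j * p j = (1 - lam) * z + lam * p i.
  have E j : q j * p j = (1 - lam) * (b j * p j) + 2 * lam * a * p j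
      + 4 * lam * a * (c j * p j) + (if i == j then (lam - 2 * n%:R * lam * a) * p j else 0).
    by rewrite qE; case: (i == j); ring.
  under eq_bigr do rewrite E.
  rewrite !big_split /= -!mulr_sumr p0 cp sum_if -/z.
  by field.
under eq_bigr do rewrite mulrBr.
by rewrite sumrB -mulr_suml qp q1; ring.
Qed.

Section BetaWeights.
Variables (R : realType) (n : nat) (d : nat -> R).
Hypothesis n_gt1 : (1 < n)%N.
Local Notation e := (dm n d).

Definition beta_num (i : nat) : R :=
  e (i + n - 1) * (e (i + n - 2) + e (i + 2)) + e (i + 2) * (e (i + n - 1) + e (i + 3)).

Definition beta_den (k : nat) : R := (e k + e (k + 2)) * (e (k + n - 1) + e (k + 3)).

Lemma betaE i : beta n d i = beta_num i / \sum_(k < n) beta_den k.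
Proof. by []. Qed.

Lemma dmDn k : e (k + n) = e k.
Proof. by rewrite /dm modnDr. Qed.

Lemma sum_dm_mul_shift a b c :
  \sum_(k < n) e (k + c + a) * e (k + c + b) = \sum_(k < n) e (k + a) * e (k + b).
Proof.
apply: (@sum_ord_shift _ n c (fun k => e (k + a) * e (k + b))) => k.
by rewrite !(addnAC k n) !dmDn.
Qed.

Lemma sum_beta_num : \sum_(i < n) beta_num i = \sum_(k < n) beta_den k.
Proof.
(* Each product is written as e (k + c + a) * e (k + c + b) so that
   sum_dm_mul_shift removes the offset c. *)
have numE i : beta_num i = e (i + (n - 2) + 1) * e (i + (n - 2) + 0)
    + 2 * (e (i + (n - 1) + 0) * e (i + (n - 1) + 3)) + e (i + 2) * e (i + 3).
  rewrite /beta_num (_ : i + (n - 1) + 3 = i + 2 + n)%N ?dmDn; last by lia.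
  rewrite !addn0 (_ : i + (n - 2) + 1 = i + n - 1)%N; last by lia.
  rewrite (_ : i + (n - 2) = i + n - 2)%N; last by lia.
  rewrite (_ : i + (n - 1) = i + n - 1)%N; last by lia.
  ring.
have denE k : beta_den k = e (k + (n - 1) + 1) * e (k + (n - 1) + 0)
    + e (k + 0) * e (k + 3) + e (k + (n - 1) + 0) * e (k + (n - 1) + 3) + e (k + 2) * e (k + 3).
  rewrite /beta_den (_ : k + (n - 1) + 3 = k + 2 + n)%N ?dmDn; last by lia.
  rewrite (_ : k + (n - 1) + 1 = k + n)%N ?dmDn; last by lia.
  rewrite !addn0 (_ : k + (n - 1) = k + n - 1)%N; last by lia.
  ring.
under eq_bigr do rewrite numE; under [RHS]eq_bigr do rewrite denE.
by rewrite !big_split /= -mulr_sumr !sum_dm_mul_shift; ring.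
Qed.

Lemma sum_beta : (forall i, (i < n)%N -> 0 < d i) -> \sum_(i < n) beta n d i = 1.
Proof.
move=> d_pos; have e_pos k : 0 < e k by rewrite d_pos // ltn_pmod // ltnW.
have den_pos k : 0 < beta_den k by rewrite mulr_gt0 ?addr_gt0.
under eq_bigr do rewrite betaE.
rewrite -mulr_suml sum_beta_num divff //; apply/eqP.
move/(psumr_eq0P (fun (k : 'I_n) _ => ltW (den_pos k)))/(_ (Ordinal (ltnW n_gt1)) isT)/eqP.
by rewrite gt_eqF.
Qed.

End BetaWeights.

Lemma QmatE (R : realType) (n : nat) (d : nat -> R) (lam : R) (i j : 'I_n) :
  Qmat n d lam i j = (1 - lam) * beta n d j
    + 2 * lam * alpha n d i * (1 + 2 * cos (theta R n j - theta R n i))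
    + (if i == j then lam - 2 * n%:R * lam * alpha n d i else 0).
Proof.
rewrite mxE; case: eqP => [->|_]; first by rewrite subrr cos0; ring.
by rewrite addr0 /theta; congr (_ + _ * (_ + _ * cos _)); ring.
Qed.

Theorem lemma3 (R : realType) (n : nat) (d : nat -> R) (lam : R) :
  (3 <= n)%N ->
  (forall i, (i < n)%N -> 0 < d i) ->
  1 / 4 < lam -> lam < 1 ->
  Qmat n d lam *m PmC n d = lam *: PmC n d.
Proof.
move=> n3 d_pos _ _; have n1 : (1 < n)%N := ltnW n3.
apply/matrixP => i k.
have CPE : CP n d 0 k = \sum_(l < n) beta n d l * Pmat R n l k.
  by rewrite /CP summxE; apply: eq_bigr => l _; rewrite !mxE.
have PmCE j : PmC n d j k = Pmat R n j k - CP n d 0 k by rewrite !mxE.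
rewrite [LHS]mxE [RHS]mxE; under eq_bigr do rewrite PmCE; rewrite PmCE CPE.
apply: (@sum_mul_centered_eigen _ n i lam (alpha n d i) _
          (fun j => cos (theta R n j - theta R n i))).
- by move=> j; rewrite QmatE.
- by apply: sum_beta.
- by apply: sum_Pmat_col.
- by apply: sum_cos_theta_sub.
- by apply: sum_cos_theta_sub_mul_Pmat.
Qed.
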